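(* Let $A,B\in\mathcal{B}(\mathcal{H})$ and let $B=X+iY$ be the Cartesian decomposition of $B$. Then $$w^2(AB\pm BA^* )\leq 2\|A\|^2\left(w(X^2)+w(Y^2)+\sqrt{\left(w(X^2)-w(Y^2)\right)^2+w^2(XY+YX)}\right).$$
   Context: $\mathcal{H}$ is a complex Hilbert space and $\mathcal{B}(\mathcal{H})$ is the algebra of bounded linear operators on $\mathcal{H}$. For $T\in\mathcal{B}(\mathcal{H})$, $w(T)=\sup\{|\langle Tx,x\rangle|:x\in\mathcal{H},\|x\|=1\}$ is the numerical radius and $\|T\|$ the operator norm. The Cartesian decomposition $B=X+iY$ means $X=\frac{B+B^*}{2}$ and $Y=\frac{B-B^*}{2i}$, both self-adjoint. *)

From HB Require Import structures.
From mathcomp Require Import all_boot all_order all_algebra.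
From mathcomp Require Import all_classical all_reals.
From mathcomp Require Import complex.
Set Implicit Arguments. Unset Strict Implicit. Unset Printing Implicit Defensive.
Import Order.TTheory GRing.Theory Num.Theory ComplexField Normc.
Local Open Scope ring_scope.
Local Open Scope classical_set_scope.
Local Open Scope complex_scope.

Section Hilbert.
Variable R : realType.
Variable V : lmodType R[i].
Variable ip : V -> V -> R[i].

Definition vnorm (x : V) : R := Num.sqrt (complex.Re (ip x x)).

Record is_hilbert : Prop := IsHilbert {
  ip_linl : forall (a : R[i]) (x y z : V), ip (a *: x + y) z = a * ip x z + ip y z;
  ip_conj : forall x y : V, ip y x = (ip x y)^*;
  ip_pos  : forall x : V, x != 0 -> 0 < ip x x;
  ip_complete : forall u : nat -> V,
    (forall e : R, 0 < e -> exists N : nat, forall m n : nat,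
        (N <= m)%N -> (N <= n)%N -> vnorm (u m - u n) < e) ->
    exists l : V, forall e : R, 0 < e -> exists N : nat, forall n : nat,
        (N <= n)%N -> vnorm (u n - l) < e }.

Definition bounded_op (T : V -> V) : Prop :=
  (forall (a : R[i]) (x y : V), T (a *: x + y) = a *: T x + T y) /\
  exists M : R, forall x : V, vnorm (T x) <= M * vnorm x.

Definition is_adjoint (T T' : V -> V) : Prop :=
  forall x y : V, ip (T x) y = ip x (T' y).

Definition opnorm (T : V -> V) : R :=
  sup [set vnorm (T x) | x in [set x : V | vnorm x <= 1]].

Definition numrad (T : V -> V) : R :=
  sup [set normc (ip (T x) x) | x in [set x : V | vnorm x = 1]].

Definition opadd (S T : V -> V) : V -> V := fun x => S x + T x.
Definition opsub (S T : V -> V) : V -> V := fun x => S x - T x.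
Definition opmul (S T : V -> V) : V -> V := fun x => S (T x).
Definition opscale (a : R[i]) (T : V -> V) : V -> V := fun x => a *: T x.

(* Cartesian decomposition B = X + iY with B^* = Bs *)
Definition re_part (B Bs : V -> V) : V -> V := opscale (2%:R)^-1 (opadd B Bs).
Definition im_part (B Bs : V -> V) : V -> V := opscale (2%:R * Complex 0 1)^-1 (opsub B Bs).

End Hilbert.

(* Fix a unit vector x and put z := A^* x.  Then
   <(AB + BA^* )x, x> = <Bx, z> + <z, B^* x> = 2 Re<Xx, z> + 2i Re<Yx, z>,
   so with p := Re<Xx, z> and q := Re<Yx, z> its squared modulus is 4 (p^2 + q^2).
   As p^2 + q^2 = Re<pXx + qYx, z>, Cauchy-Schwarz gives
   (p^2 + q^2)^2 <= ||pXx + qYx||^2 ||A||^2, and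
   ||pXx + qYx||^2 = p^2 <X^2 x, x> + q^2 <Y^2 x, x> + pq <(XY + YX) x, x>
   is a real quadratic form in (p, q) dominated by (p^2 + q^2) times the largest
   eigenvalue of [[w(X^2), w(XY + YX)/2], [w(XY + YX)/2, w(Y^2)]].
   For AB - BA^* the same computation applies with z := i A^* x. *)

From HB Require Import structures.
From mathcomp Require Import all_boot all_order all_algebra.
From mathcomp Require Import all_classical all_reals.
From mathcomp Require Import complex.
From mathcomp Require Import ring lra.
Import Order.TTheory GRing.Theory Num.Theory ComplexField Normc.
Local Open Scope ring_scope.
Local Open Scope complex_scope.
(* [Num.Theory] exports its own [Re]; we mean the projections of [R[i]]. *)
Local Notation Re := (@complex.Re _).
Local Notation Im := (@complex.Im _).

Section ComplexFacts.
Context {R : realType}.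
Implicit Types w : R[i].

Lemma normc_ge0 w : 0 <= normc w.
Proof. by case: w => a b; rewrite sqrtr_ge0. Qed.

Lemma normc_sqr w : normc w ^+ 2 = Re w ^+ 2 + Im w ^+ 2.
Proof. by case: w => a b; rewrite /= sqr_sqrtr // addr_ge0 ?sqr_ge0. Qed.

Lemma normr_Re_le_normc w : `|Re w| <= normc w.
Proof. by case: w => a b; rewrite /= -sqrtr_sqr ler_wsqrtr // lerDl sqr_ge0. Qed.

Lemma Re_realM (s : R) w : Re (s%:C * w) = s * Re w.
Proof. by case: w => a b /=; ring. Qed.

Lemma Re_conjM w : Re (w^* * w) = normc w ^+ 2.
Proof. by rewrite normc_sqr; case: w => a b /=; ring. Qed.

Lemma normc_conj w : normc (w^*) = normc w.
Proof. by case: w => a b; rewrite /= sqrrN. Qed.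

Lemma normc_real (s : R) : normc s%:C = `|s|.
Proof. by rewrite /= expr0n addr0 sqrtr_sqr. Qed.

Lemma conjc_i : 'i%C^* = - 'i%C :> R[i].
Proof. by apply/eqP; rewrite eq_complex /= oppr0 !eqxx. Qed.

Lemma normc_i : normc 'i%C = 1 :> R.
Proof. by rewrite /= expr0n expr1n add0r sqrtr1. Qed.

Lemma normc_inv2 : normc (2%:R^-1 : R[i]) = 2^-1.
Proof. by rewrite normcV -[2%:R]/(1 *+ 2) normcMn normc1. Qed.

Lemma normc_inv2i : normc ((2%:R * 'i%C)^-1 : R[i]) = 2^-1.
Proof. by rewrite normcV normcM normc_i mulr1 -[2%:R]/(1 *+ 2) normcMn normc1. Qed.

Lemma conjc_inv2 : (2%:R^-1 : R[i])^* = 2%:R^-1.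
Proof. by rewrite conjc_inv conjc_nat. Qed.

Lemma conjc_inv2i : ((2%:R * 'i%C)^-1 : R[i])^* = - (2%:R * 'i%C)^-1.
Proof.
rewrite conjc_inv -invrN; congr GRing.inv.
by apply/eqP; rewrite eq_complex /= !(mul0r, mulr0, mulr1, subr0, addr0, oppr0) !eqxx.
Qed.

End ComplexFacts.

(* [a + b + sqrt ((a - b)^2 + c^2)] is twice the largest eigenvalue of the symmetric matrix [[a, c/2], [c/2, b]]. *)
Lemma quadratic_form_le {R : rcfType} (p q : R) {a b c wa wb wc : R} :
  a <= wa -> b <= wb -> `|c| <= wc ->
  2 * (p ^+ 2 * a + q ^+ 2 * b + p * q * c) <=
    (p ^+ 2 + q ^+ 2) * (wa + wb + Num.sqrt ((wa - wb) ^+ 2 + wc ^+ 2)).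
Proof.
move=> le_a le_b le_c.
set r := p ^+ 2 + q ^+ 2; set S := Num.sqrt _.
set L := (p ^+ 2 - q ^+ 2) * (wa - wb) + 2 * p * q * c.
have S_ge0 : 0 <= S by rewrite sqrtr_ge0.
have r_ge0 : 0 <= r by rewrite addr_ge0 ?sqr_ge0.
have c2 : c ^+ 2 <= wc ^+ 2.
  by rewrite -real_normK ?num_real // lerXn2r ?nnegrE ?(le_trans _ le_c).
have L2 : L ^+ 2 <= (r * S) ^+ 2.
  have -> : (r * S) ^+ 2 = L ^+ 2 + ((p ^+ 2 - q ^+ 2) * c - 2 * p * q * (wa - wb)) ^+ 2
                           + r ^+ 2 * (wc ^+ 2 - c ^+ 2).
    by rewrite exprMn sqr_sqrtr ?addr_ge0 ?sqr_ge0 // /L /r; ring.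
  by rewrite -addrA lerDl addr_ge0 ?sqr_ge0 ?mulr_ge0 ?subr_ge0.
have LS : L <= r * S by have := mulr_ge0 r_ge0 S_ge0; nra.
have := ler_wpM2l (sqr_ge0 p) le_a; have := ler_wpM2l (sqr_ge0 q) le_b.
rewrite /L /r in LS *; lra.
Qed.

Section InnerProduct.
Context {R : realType} {V : lmodType R[i]} {ip : V -> V -> R[i]}.
Hypothesis hH : is_hilbert ip.
Local Notation vn := (vnorm ip).

Lemma ipDl x y z : ip (x + y) z = ip x z + ip y z.
Proof. by have := ip_linl hH 1 x y z; rewrite scale1r mul1r. Qed.

Lemma ip0l z : ip 0 z = 0.
Proof. by apply: (addrI (ip 0 z)); rewrite -ipDl !addr0. Qed.

Lemma ipZl a x z : ip (a *: x) z = a * ip x z.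
Proof. by rewrite -[a *: x]addr0 (ip_linl hH) ip0l addr0. Qed.

Lemma ipBl x y z : ip (x - y) z = ip x z - ip y z.
Proof. by rewrite ipDl -scaleN1r ipZl mulN1r. Qed.

Lemma ipZr (a : R[i]) x z : ip z (a *: x) = conjc a * ip z x.
Proof. by rewrite (ip_conj hH) ipZl rmorphM /= -(ip_conj hH). Qed.

Lemma ipDr x y z : ip z (x + y) = ip z x + ip z y.
Proof. by rewrite (ip_conj hH) ipDl rmorphD /= -!(ip_conj hH). Qed.

Lemma ipBr x y z : ip z (x - y) = ip z x - ip z y.
Proof. by rewrite (ip_conj hH) ipBl rmorphB /= -!(ip_conj hH). Qed.

Lemma Re_ipC x y : Re (ip y x) = Re (ip x y).
Proof. by rewrite (ip_conj hH); case: (ip x y). Qed.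

Lemma Re_ipZZ (s t : R) x y : Re (ip (s%:C *: x) (t%:C *: y)) = s * t * Re (ip x y).
Proof. by rewrite ipZl ipZr; case: (ip x y) => u v /=; ring. Qed.

Lemma Re_ipDD x y :
  Re (ip (x + y) (x + y)) = Re (ip x x) + 2 * Re (ip x y) + Re (ip y y).
Proof. by rewrite !ipDl !ipDr !raddfD /= (Re_ipC y x); ring. Qed.

Lemma ip_self x : ip x x = (Re (ip x x))%:C.
Proof.
have := ip_conj hH x x; case: (ip x x) => a b [] b0.
by apply/eqP; rewrite eq_complex /= eqxx /=; apply/eqP; lra.
Qed.

Lemma Re_ip_self_ge0 x : 0 <= Re (ip x x).
Proof.
have [->|/(ip_pos hH)] := eqVneq x 0; first by rewrite ip0l.
by rewrite ltcE => /andP[_ /ltW].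
Qed.

Lemma vnorm_ge0 x : 0 <= vn x.
Proof. exact: sqrtr_ge0. Qed.

Lemma vnorm_sqr x : vn x ^+ 2 = Re (ip x x).
Proof. by rewrite sqr_sqrtr // Re_ip_self_ge0. Qed.

Lemma vnorm_eq0 {x} : vn x = 0 -> x = 0.
Proof.
move=> x0; apply/eqP; apply: contraT => /(ip_pos hH).
by rewrite ltcE -vnorm_sqr x0 expr0n ltxx andbF.
Qed.

Lemma vnormZ a x : vn (a *: x) = normc a * vn x.
Proof.
rewrite /vnorm; have -> : Re (ip (a *: x) (a *: x)) = normc a ^+ 2 * Re (ip x x).
  by rewrite ipZl ipZr ip_self normc_sqr; case: a => u v /=; ring.
by rewrite sqrtrM ?sqr_ge0 // sqrtr_sqr ger0_norm ?normc_ge0.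
Qed.

Lemma Re_ip_le x y : Re (ip x y) <= vn x * vn y.
Proof.
set a := vn x; set b := vn y.
have := Re_ip_self_ge0 (b%:C *: x + (- a)%:C *: y).
rewrite Re_ipDD !Re_ipZZ -!vnorm_sqr -/a -/b => h.
have [ab_gt0|ab_le0] := ltrP 0 (a * b); first nra.
have /orP[/eqP a0|/eqP b0] : (a == 0) || (b == 0).
  by rewrite -mulf_eq0 eq_le ab_le0 mulr_ge0 ?vnorm_ge0.
- by rewrite (vnorm_eq0 a0) ip0l a0 mul0r.
- by rewrite -Re_ipC (vnorm_eq0 b0) ip0l b0 mulr0.
Qed.

Lemma normc_ip_le x y : normc (ip x y) <= vn x * vn y.
Proof.
have := Re_ip_le ((ip x y)^* *: x) y.
rewrite ipZl Re_conjM vnormZ normc_conj -mulrA => h.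
have := normc_ge0 (ip x y); have := mulr_ge0 (vnorm_ge0 x) (vnorm_ge0 y); nra.
Qed.

Lemma vnormD x y : vn (x + y) <= vn x + vn y.
Proof.
have := Re_ip_le x y; have := Re_ipDD x y; rewrite -!vnorm_sqr.
have := vnorm_ge0 (x + y); have := vnorm_ge0 x; have := vnorm_ge0 y; nra.
Qed.

Lemma vnormB x y : vn (x - y) <= vn x + vn y.
Proof. by rewrite -scaleN1r -[vn y]mul1r -normc1 -normcN -vnormZ vnormD. Qed.

Lemma vnorm_iZ x : vn ('i%C *: x) = vn x.
Proof. by rewrite vnormZ normc_i mul1r. Qed.

Lemma vnorm0 : vn 0 = 0.
Proof. by rewrite /vnorm ip0l sqrtr0. Qed.

Lemma adjointC {T Ts : V -> V} : is_adjoint ip T Ts -> is_adjoint ip Ts T.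
Proof. by move=> adjT u v; rewrite (ip_conj hH) -adjT -(ip_conj hH). Qed.

Definition bounded_by (T : V -> V) (M : R) := forall x, vn (T x) <= M * vn x.

Lemma bounded_by_comp {S T : V -> V} {M N : R} : 0 <= M ->
  bounded_by S M -> bounded_by T N -> bounded_by (opmul S T) (M * N).
Proof. by move=> M0 hS hT x; rewrite -mulrA (le_trans (hS _)) ?ler_wpM2l. Qed.

Lemma bounded_by_add {S T : V -> V} {M N : R} :
  bounded_by S M -> bounded_by T N -> bounded_by (opadd S T) (M + N).
Proof. by move=> hS hT x; rewrite mulrDl (le_trans (vnormD _ _)) ?lerD. Qed.

Lemma adjoint_bounded_by {T Ts : V -> V} {M : R} : 0 <= M ->
  is_adjoint ip T Ts -> bounded_by T M -> bounded_by Ts M.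
Proof.
move=> M0 adjT hT x.
have : vn (Ts x) ^+ 2 <= M * vn (Ts x) * vn x.
  rewrite vnorm_sqr -adjT (le_trans (ler_norm _)) // (le_trans (normr_Re_le_normc _)) //.
  by rewrite (le_trans (normc_ip_le _ _)) // ler_wpM2r ?vnorm_ge0.
have := vnorm_ge0 (Ts x); have := mulr_ge0 M0 (vnorm_ge0 x); nra.
Qed.

Lemma bounded_by_opnorm {T : V -> V} : bounded_op ip T -> bounded_by T (opnorm ip T).
Proof.
move=> [linT [M hM]] u.
have T0 : T 0 = 0 by have := linT (-1) 0 0; rewrite scaler0 addr0 scaleN1r addNr.
have [->|u_neq0] := eqVneq u 0; first by rewrite T0 vnorm0 mulr0.
have u_gt0 : 0 < vn u by rewrite lt_def vnorm_ge0 andbT; apply: contra u_neq0 => /eqP/vnorm_eq0->.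
set c := (vn u)^-1.
have normc_c : normc c%:C = c by rewrite normc_real ger0_norm // invr_ge0 ltW.
have cu1 : vn (c%:C *: u) <= 1 by rewrite vnormZ normc_c mulVf ?gt_eqF.
have ubT : has_ubound [set vn (T x) | x in [set x | vn x <= 1]].
  exists `|M| => _ [x /= x1 <-]; rewrite (le_trans (hM x)) //.
  have := vnorm_ge0 x; have := normr_ge0 M; have := ler_norm M; nra.
have := ub_le_sup ubT (ex_intro2 _ _ (c%:C *: u) cu1 erefl).
by rewrite -[c%:C *: u]addr0 linT T0 addr0 vnormZ normc_c mulrC -ler_pdivrMr.
Qed.

Lemma sup_ge0 (E : set R) : (forall e, E e -> 0 <= e) -> 0 <= sup E.
Proof.
move=> E_ge0; have [[[e Ee] ubE]|/sup_out->//] := pselect (has_sup E).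
by rewrite (le_trans (E_ge0 e Ee)) ?ub_le_sup.
Qed.

Lemma opnorm_ge0 T : 0 <= opnorm ip T.
Proof. by apply: sup_ge0 => _ [x _ <-]; apply: vnorm_ge0. Qed.

Lemma numrad_ge0 T : 0 <= numrad ip T.
Proof. by apply: sup_ge0 => _ [x _ <-]; apply: normc_ge0. Qed.

Lemma normc_ip_le_numrad {T : V -> V} {M : R} {x : V} : bounded_by T M -> vn x = 1 ->
  normc (ip (T x) x) <= numrad ip T.
Proof.
move=> hT x1; apply: ub_le_sup; last by exists x.
exists M => _ [y /= y1 <-].
by rewrite (le_trans (normc_ip_le _ _)) // y1 mulr1 -[M]mulr1 -y1 hT.
Qed.

Lemma numrad_sqr_le T K : 0 <= K ->
  (forall x, vn x = 1 -> normc (ip (T x) x) ^+ 2 <= K) -> numrad ip T ^+ 2 <= K.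
Proof.
move=> K0 hT; rewrite -(sqr_sqrtr K0) ler_sqr ?nnegrE ?numrad_ge0 ?sqrtr_ge0 // /numrad.
have [[E0 _]|/sup_out->] := pselect (has_sup [set normc (ip (T x) x) | x in [set x | vn x = 1]]);
  last exact: sqrtr_ge0.
apply: ge_sup => // _ [x /= x1 <-].
by rewrite -(ler_sqr (normc_ge0 _)) ?nnegrE ?sqrtr_ge0 // sqr_sqrtr // hT.
Qed.

Section Cartesian.
Context {B Bs : V -> V}.
Hypothesis adjB : is_adjoint ip B Bs.
Local Notation X := (re_part B Bs).
Local Notation Y := (im_part B Bs).

Lemma re_part_selfadjoint : is_adjoint ip X X.
Proof.
move=> u v; rewrite /re_part /opscale /opadd ipZl ipZr ipDl ipDr.
rewrite adjB (adjointC adjB) [in RHS]addrC; congr (_ * _); exact: esym conjc_inv2.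
Qed.

Lemma im_part_selfadjoint : is_adjoint ip Y Y.
Proof.
move=> u v; rewrite /im_part /opscale /opsub ipZl ipZr ipBl ipBr.
rewrite adjB (adjointC adjB) -opprB mulrN -mulNr; congr (_ * _).
exact: esym conjc_inv2i.
Qed.

Lemma cartesian_decomposition x : B x = X x + 'i%C *: Y x /\ Bs x = X x - 'i%C *: Y x.
Proof.
have i_neq0 : 'i%C != 0 :> R[i] by rewrite eq_complex /= oner_eq0 andbF.
have -> : 'i%C *: Y x = 2%:R^-1 *: (B x - Bs x).
  rewrite /im_part /opscale; apply: etrans (scalerA _ _ _) _.
  by congr (_ *: _); rewrite invfM mulrCA mulfV ?mulr1.
have twice_half (v : V) : v = 2%:R^-1 *: (v + v).
  by rewrite scalerDr -scalerDl -[2%:R^-1]mul1r -splitr scale1r.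
rewrite /re_part /opscale /opadd -scalerDr -scalerBr; split.
  by rewrite addrACA subrr addr0 -twice_half.
by rewrite opprB (addrC (B x)) addrACA subrr addr0 -twice_half.
Qed.

Lemma ip_AB_add_BAs {A As : V -> V} {x : V} : is_adjoint ip A As ->
  ip (opadd (opmul A B) (opmul B As) x) x = ip (B x) (As x) + ip (As x) (Bs x).
Proof. by move=> adjA; rewrite /opadd /opmul ipDl adjA (adjB (As x)). Qed.

Lemma normc_ip_AB_sub_BAs {A As : V -> V} {x : V} : is_adjoint ip A As ->
  normc (ip (opsub (opmul A B) (opmul B As) x) x) =
  normc (ip (B x) ('i%C *: As x) + ip ('i%C *: As x) (Bs x)).
Proof.
move=> adjA; rewrite /opsub /opmul ipBl adjA (adjB (As x)) ipZr (ipZl 'i%C) conjc_i.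
by rewrite mulNr -mulrN -mulrDr normcM normc_i mul1r -normcN opprB addrC.
Qed.

Hypothesis hB : bounded_op ip B.

Let adjoint_bound : bounded_by Bs (opnorm ip B).
Proof. exact: adjoint_bounded_by (opnorm_ge0 B) adjB (bounded_by_opnorm hB). Qed.

Lemma re_part_bounded_by : bounded_by X (opnorm ip B).
Proof.
move=> x; rewrite /re_part /opscale /opadd vnormZ normc_inv2.
have := vnormD (B x) (Bs x); have := bounded_by_opnorm hB x; have := adjoint_bound x; lra.
Qed.

Lemma im_part_bounded_by : bounded_by Y (opnorm ip B).
Proof.
move=> x; rewrite /im_part /opscale /opsub vnormZ normc_inv2i.
have := vnormB (B x) (Bs x); have := bounded_by_opnorm hB x; have := adjoint_bound x; lra.
Qed.

Local Notation wX := (numrad ip (opmul X X)).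
Local Notation wY := (numrad ip (opmul Y Y)).
Local Notation wXY := (numrad ip (opadd (opmul X Y) (opmul Y X))).

Lemma cartesian_form_bound {x z : V} {K : R} : vn x = 1 -> vn z <= K ->
  normc (ip (B x) z + ip z (Bs x)) ^+ 2 <=
    2 * K ^+ 2 * (wX + wY + Num.sqrt ((wX - wY) ^+ 2 + wXY ^+ 2)).
Proof.
move=> x1 zK; have [BE BsE] := cartesian_decomposition x.
have -> : normc (ip (B x) z + ip z (Bs x)) ^+ 2 =
           4 * (Re (ip (X x) z) ^+ 2 + Re (ip (Y x) z) ^+ 2).
  rewrite BE BsE [ip z _](ip_conj hH) ipDl ipBl !(ipZl 'i%C) normc_sqr.
  by case: (ip (X x) z) => ? ?; case: (ip (Y x) z) => ? ? /=; ring.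
set p := Re (ip (X x) z); set q := Re (ip (Y x) z).
set u := p%:C *: X x + q%:C *: Y x.
have pq_le : p ^+ 2 + q ^+ 2 <= vn u * vn z.
  suff <- : Re (ip u z) = p ^+ 2 + q ^+ 2 by apply: Re_ip_le.
  by rewrite ipDl (ipZl p%:C) (ipZl q%:C) raddfD /= !Re_realM.
have u_sqr : vn u ^+ 2 = p ^+ 2 * Re (ip (X (X x)) x) + q ^+ 2 * Re (ip (Y (Y x)) x)
                         + p * q * Re (ip (X (Y x) + Y (X x)) x).
  rewrite vnorm_sqr Re_ipDD !Re_ipZZ ipDl raddfD /= (re_part_selfadjoint (X x)).
  rewrite (im_part_selfadjoint (Y x)) (re_part_selfadjoint (Y x)).
  by rewrite (im_part_selfadjoint (X x)) (Re_ipC (X x) (Y x)) !expr2; ring.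
have Re_le_numrad T M : bounded_by T M -> `|Re (ip (T x) x)| <= numrad ip T.
  by move=> hT; rewrite (le_trans (normr_Re_le_normc _)) ?(normc_ip_le_numrad hT x1).
have hX := re_part_bounded_by; have hY := im_part_bounded_by; have B0 := opnorm_ge0 B.
have := quadratic_form_le p q
  (le_trans (ler_norm _) (Re_le_numrad _ _ (bounded_by_comp B0 hX hX)))
  (le_trans (ler_norm _) (Re_le_numrad _ _ (bounded_by_comp B0 hY hY)))
  (Re_le_numrad _ _ (bounded_by_add (bounded_by_comp B0 hX hY) (bounded_by_comp B0 hY hX))).
rewrite -u_sqr; set W := _ + _ + _ => uW.
have W_ge0 : 0 <= W by rewrite !addr_ge0 ?numrad_ge0 ?sqrtr_ge0.
have r_ge0 : 0 <= p ^+ 2 + q ^+ 2 by rewrite addr_ge0 ?sqr_ge0.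
have r2 : (p ^+ 2 + q ^+ 2) ^+ 2 <= vn u ^+ 2 * K ^+ 2.
  have K_ge0 := le_trans (vnorm_ge0 z) zK.
  rewrite -exprMn ler_sqr ?nnegrE ?mulr_ge0 ?vnorm_ge0 //.
  by rewrite (le_trans pq_le) // ler_wpM2l ?vnorm_ge0.
move: r_ge0 r2 uW; move: (p ^+ 2 + q ^+ 2) (vn u ^+ 2) => r N r_ge0 r2 NW.
have [->|r_neq0] := eqVneq r 0; first by have := sqr_ge0 K; nra.
have r_gt0 : 0 < r by rewrite lt_def r_neq0.
rewrite -(ler_pM2l r_gt0); have := sqr_ge0 K; nra.
Qed.

End Cartesian.
End InnerProduct.

Local Close Scope complex_scope.

Theorem theorem2p13 (R : realType) (V : lmodType R[i]) (ip : V -> V -> R[i])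
  (hH : is_hilbert ip) (A As B Bs : V -> V)
  (hA : bounded_op ip A) (hB : bounded_op ip B)
  (hAs : is_adjoint ip A As) (hBs : is_adjoint ip B Bs) :
  let X := re_part B Bs in
  let Y := im_part B Bs in
  let rhs := 2 * opnorm ip A ^+ 2 *
     (numrad ip (opmul X X) + numrad ip (opmul Y Y) +
      Num.sqrt ((numrad ip (opmul X X) - numrad ip (opmul Y Y)) ^+ 2 +
                numrad ip (opadd (opmul X Y) (opmul Y X)) ^+ 2)) in
  numrad ip (opadd (opmul A B) (opmul B As)) ^+ 2 <= rhs /\
  numrad ip (opsub (opmul A B) (opmul B As)) ^+ 2 <= rhs.
Proof.
move=> X Y rhs.
have rhs_ge0 : 0 <= rhs.
  by rewrite /rhs !mulr_ge0 ?ler0n ?sqr_ge0 ?opnorm_ge0 ?addr_ge0 ?numrad_ge0 ?sqrtr_ge0.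
have As_bound x : vnorm ip x = 1 -> vnorm ip (As x) <= opnorm ip A.
  move=> x1; have := adjoint_bounded_by hH (opnorm_ge0 A) hAs (bounded_by_opnorm hH hA) x.
  by rewrite x1 mulr1.
have form_bound x z : vnorm ip x = 1 -> vnorm ip z <= opnorm ip A ->
    normc (ip (B x) z + ip z (Bs x)) ^+ 2 <= rhs.
  by move=> x1 zK; have bound := cartesian_form_bound hH hBs hB x1 zK; exact: bound.
split; apply: numrad_sqr_le rhs_ge0 _ => x x1; have Asx := As_bound x x1.
- by rewrite (ip_AB_add_BAs hH hBs hAs) form_bound.
- by rewrite (normc_ip_AB_sub_BAs hH hBs hAs) form_bound ?vnorm_iZ.
Qed.
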